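(* Let $F_t$, $t\in[0,1]$, be a one-parameter family on a complete metric space $(\mathbb X,d)$ satisfying (H1), (H2), (H3), and let $J=\{1\le i\le N:\mathrm{Lip}(f_{(i,1)},d)=1\}$. If the monoid $\mathbb M(\{f_{(i,1)}:i\in J\})$ is compact, then the lower transition attractor $A_\bullet$ of $F_t$ is compact.
   Context: Let $(\mathbb X,d)$ be a complete metric space. A one-parameter family is $F_t=\{f_{(1,t)},\dots,f_{(N,t)}\}$, $t\in[0,1]$, $N\ge2$, of continuous self-maps of $\mathbb X$. $\mathrm{Lip}(f,d)=\sup_{x\ne y}d(f(x),f(y))/d(x,y)$ and $\mathrm{Lip}(F_t,d)=\max_i\mathrm{Lip}(f_{(i,t)},d)$. Conditions: (H1) for every $x\in\mathbb X$ and every $i$, the map $t\mapsto f_{(i,t)}(x)$ is continuous on $[0,1]$; (H2) $\mathrm{Lip}(F_t,d)<1$ for all $t\in[0,1)$; (H3) for each $i$ the limit $q_i=\lim_{t\to1^-}q_{i,t}$ exists, where $q_{i,t}$ is the unique fixed point of $f_{(i,t)}$ for $t\in[0,1)$; $Q=\{q_1,\dots,q_N\}$. For an IFS $F$ (a finite or infinite family of continuous self-maps) and $S\subseteq\mathbb X$, the Hutchinson operator is $F(S)=\overline{\bigcup_{f\in F}f(S)}$. The lower transition attractor of $F_t$ is the smallest (w.r.t. inclusion) set $A_\bullet\subseteq\mathbb X$ with $F_1(A_\bullet)=A_\bullet$ and $Q\subseteq A_\bullet$. An IFS $F$ is compact if $F(K)$ is compact for every compact $K\subseteq\mathbb X$.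 The monoid of $F$ is $\mathbb M(F)=\{f_1\circ\cdots\circ f_k:f_j\in F,k\in\mathbb N\}\cup\{\mathrm{id}_{\mathbb X}\}$, regarded as an IFS. *)

From HB Require Import structures.
From mathcomp Require Import all_boot all_order all_algebra.
From mathcomp Require Import all_classical all_reals all_analysis.
Set Implicit Arguments. Unset Strict Implicit. Unset Printing Implicit Defensive.
Import Order.TTheory GRing.Theory Num.Theory.
Import numFieldNormedType.Exports.
Local Open Scope classical_set_scope.
Local Open Scope ring_scope.

Section Defs.
Context {R : realType} {X : metricType R}.

Definition complete_space : Prop :=
  forall u : nat -> X,
    (forall e : R, 0 < e -> exists n : nat, forall m k : nat, (n <= m)%N -> (n <= k)%N ->
        mdist (u m) (u k) < e) ->
    exists l : X, u @ \oo --> l.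

Definition Lip (f : X -> X) : \bar R :=
  ereal_sup [set r : \bar R | exists x y : X, x <> y /\ r = ((mdist (f x) (f y)) / mdist x y)%:E].

Definition LipF (N : nat) (F : 'I_N -> X -> X) : \bar R :=
  \big[Order.max/-oo%E]_(i < N) Lip (F i).

Definition Hutch (G : set (X -> X)) (S : set X) : set X :=
  closure (\bigcup_(g in G) g @` S).

Definition compact_IFS (G : set (X -> X)) : Prop :=
  forall K : set X, compact K -> compact (Hutch G K).

Definition monoid (G : set (X -> X)) : set (X -> X) :=
  [set h | exists s : seq (X -> X), (forall g, g \in s -> G g) /\ h = foldr comp id s].

Definition fam_at (N : nat) (f : 'I_N -> R -> X -> X) (t : R) : set (X -> X) :=
  [set f i t | i in setT].

Definition lower_transition_attractor (N : nat) (f : 'I_N -> R -> X -> X)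
    (q : 'I_N -> X) (A : set X) : Prop :=
  [/\ Hutch (fam_at f 1) A = A, range q `<=` A &
      forall B : set X, Hutch (fam_at f 1) B = B -> range q `<=` B -> A `<=` B].

End Defs.

From HB Require Import structures.
From mathcomp Require Import all_boot all_order all_algebra.
From mathcomp Require Import all_classical all_reals all_analysis.
From mathcomp Require Import lra.

(* Each f_(i,1) is a pointwise limit of 1-Lipschitz maps, hence 1-Lipschitz, and
   it fixes q_i = lim q_(i,t). Consequently the closure of the orbit of Q under the
   monoid of F_1 is the lower transition attractor.  For compactness it suffices, X
   being complete, that this orbit be totally bounded.  The maps f_(j,1) with j not
   in J are lam-contractions for a common lam < 1; cutting a word at these maps
   writes each orbit point as g_0 (c_1 (g_1 (c_2 ...))) with every g_k in the
   compact monoid M_J.  Iterating K |-> M_J(Q u U_i f_(i,1)(K)) n times from one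
   point yields a compact set within lam^n D of the whole orbit. *)

Set Implicit Arguments. Unset Strict Implicit. Unset Printing Implicit Defensive.
Import Order.TTheory GRing.Theory Num.Theory.
Import numFieldNormedType.Exports.
Local Open Scope classical_set_scope.
Local Open Scope ring_scope.

Section Lipschitz.
Context {R : realType} {X : metricType R}.
Local Notation d := (@mdist R X).

Definition lipschitz_with (k : R) (g : X -> X) := forall x y, d (g x) (g y) <= k * d x y.

Lemma lipschitz_with_le k k' g : k <= k' -> lipschitz_with k g -> lipschitz_with k' g.
Proof.
move=> kk' gk x y; apply: le_trans (gk x y) _.
by apply: ler_wpM2r => //; exact: mdist_ge0.
Qed.

Lemma lipschitz_with_id : lipschitz_with 1 id.
Proof. by move=> x y; rewrite mul1r. Qed.

Lemma lipschitz_with_comp k k' g h : 0 <= k ->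
  lipschitz_with k g -> lipschitz_with k' h -> lipschitz_with (k * k') (g \o h).
Proof.
move=> k0 gk hk' x y /=; apply: le_trans (gk _ _) _.
by rewrite -mulrA; apply: ler_wpM2l.
Qed.

Lemma Lip_leP k g : (Lip g <= k%:E)%E <-> lipschitz_with k g.
Proof.
split=> [Lk x y|gk].
  have [->|xy] := eqVneq x y; first by rewrite !mdistxx mulr0.
  have dxy : 0 < d x y by rewrite mdist_gt0.
  rewrite -ler_pdivrMr // -lee_fin; apply: le_trans Lk.
  by apply: ereal_sup_ubound; exists x, y; split => //; apply/eqP.
apply/ereal_supP => _ [x [y [/eqP xy ->]]].
by rewrite lee_fin ler_pdivrMr ?mdist_gt0.
Qed.

Lemma Lip_lt1_contraction g : (Lip g < 1%:E)%E ->
  exists2 k, 0 <= k < 1 & lipschitz_with k g.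
Proof.
case Lg : (Lip g) => [r| |] // => [|_].
  rewrite lte_fin => r1; exists (Num.max r 0).
    by rewrite le_max lexx orbT gt_max r1 ltr01.
  apply: (@lipschitz_with_le r); first by rewrite le_max lexx.
  by apply/Lip_leP; rewrite Lg.
by exists 0; [rewrite lexx ltr01 | apply/Lip_leP; rewrite Lg leNye].
Qed.

Lemma uniform_contraction (I : finType) (P : I -> Prop) (g : I -> X -> X) :
  (forall i, P i -> exists2 k, 0 <= k < 1 & lipschitz_with k (g i)) ->
  exists2 k, 0 <= k < 1 & forall i, P i -> lipschitz_with k (g i).
Proof.
move=> gP.
have /boolp.choice [k kP] :
    forall i, exists k : R, 0 <= k < 1 /\ (P i -> lipschitz_with k (g i)).
  move=> i; have [Pi|nPi] := pselect (P i).
    by have [k k01 gk] := gP i Pi; exists k.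
  by exists 0; rewrite lexx ltr01.
exists (\big[Num.max/0]_i k i).
  by rewrite bigmax_ge_id bigmax_lt //= => i _; case/andP: (kP i).1.
by move=> i /(kP i).2; apply: lipschitz_with_le; exact: le_bigmax.
Qed.

Section Limits.
Context {T : Type} (F : set_system T) {PF : ProperFilter F}
  (g : T -> X -> X) (g0 : X -> X) (k : R).
Hypothesis g_cvg : forall x, g t x @[t --> F] --> g0 x.

Lemma lipschitz_with_cvg :
  (\forall t \near F, lipschitz_with k (g t)) -> lipschitz_with k g0.
Proof.
move=> gk x y; apply/ler_addgt0Pr => e e0.
have e2 : 0 < e / 2 by rewrite divr_gt0.
have /metricType_numDomainType.cvgr_dist_lt gx := @g_cvg x.
have /metricType_numDomainType.cvgr_dist_lt gy := @g_cvg y.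
have [t [gtk [/= gtx gty]]] := filter_ex (filterI gk (filterI (gx _ e2) (gy _ e2))).
have := gtk x y.
have := metric_triangle (g0 x) (g t x) (g0 y).
have := metric_triangle (g t x) (g t y) (g0 y).
rewrite (metric_sym (g t y)); lra.
Qed.

Lemma fixed_point_cvg (p : T -> X) (p0 : X) : 0 <= k -> p t @[t --> F] --> p0 ->
  (\forall t \near F, lipschitz_with k (g t)) ->
  (\forall t \near F, g t (p t) = p t) -> g0 p0 = p0.
Proof.
move=> k0 p_cvg gk gp; apply: mdist_positivity; apply/eqP; rewrite eq_le mdist_ge0 andbT.
apply/ler_addgt0Pr => e e0; rewrite add0r.
(* d(g0 p0, p0) <= d(g0 p0, g_t p0) + k d(p0, p_t) + d(p_t, p0), each term small *)
have k2 : 0 < k + 2 by rewrite ltr_wpDl.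
have ek : 0 < e / (k + 2) by rewrite divr_gt0.
have ekE : e / (k + 2) * (k + 2) = e by rewrite divfK ?gt_eqF.
have /metricType_numDomainType.cvgr_dist_lt gp0 := @g_cvg p0.
have /metricType_numDomainType.cvgr_dist_lt pp0 := p_cvg.
have [t [[gtk gtp] [/= hg hp]]] :=
  filter_ex (filterI (filterI gk gp) (filterI (gp0 _ ek) (pp0 _ ek))).
have := gtk p0 (p t); rewrite gtp.
have := metric_triangle (g0 p0) (g t p0) p0.
have := metric_triangle (g t p0) (p t) p0.
have : k * d p0 (p t) <= k * (e / (k + 2)) by apply: ler_wpM2l => //; exact: ltW.
rewrite (metric_sym (p t)) in hp *; move: ekE; nra.
Qed.

End Limits.
End Lipschitz.

Lemma continuous_image_closure {T : topologicalType} (g : T -> T) (S : set T) :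
  continuous g -> g @` closure S `<=` closure (g @` S).
Proof.
move=> gc _ [p Sp <-] B /gc/= gB.
have [x [Sx Bx]] := Sp _ gB.
by exists (g x); split => //; exists x.
Qed.

Section Monoid.
Context {R : realType} {X : metricType R} (G : set (X -> X)).

Lemma monoid_id : monoid G id.
Proof. by exists [::]. Qed.

Lemma monoid_gen g : G g -> monoid G g.
Proof. by move=> Gg; exists [:: g]; split => // h; rewrite inE => /eqP ->. Qed.

Lemma monoid_comp g h : monoid G g -> monoid G h -> monoid G (g \o h).
Proof.
move=> [s [Gs ->]] [s' [Gs' ->]]; exists (s ++ s'); split.
  by move=> k; rewrite mem_cat => /orP[/Gs|/Gs'].
by rewrite foldr_cat; elim: s {Gs} => //= k s <-.
Qed.

Lemma monoid_ind (P : (X -> X) -> Prop) : P id ->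
  (forall g h, G g -> monoid G h -> P h -> P (g \o h)) ->
  forall h, monoid G h -> P h.
Proof.
move=> Pid PGh _ [s [Gs ->]]; elim: s Gs => //= g s IHs Gs.
have Gs' : forall k, k \in s -> G k by move=> k ks; apply: Gs; rewrite inE ks orbT.
apply: PGh; [apply: Gs; exact: mem_head | by exists s | exact: IHs Gs'].
Qed.

Definition monoid_orbit (S : set X) : set X := [set h x | h in monoid G & x in S].

Lemma monoid_orbit_sub (S B : set X) : S `<=` B ->
  (forall g, G g -> g @` B `<=` B) -> monoid_orbit S `<=` B.
Proof.
move=> SB GB _ [h Mh [x Sx <-]]; move: h Mh.
apply: monoid_ind => [|g h Gg _ Bh]; first exact: SB.
by apply: GB Gg _ _; exists (h x).
Qed.

Hypothesis G_cont : forall g, G g -> continuous g.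

Lemma Hutch_closure_monoid_orbit (S : set X) :
  (forall x, S x -> exists2 g, G g & g x = x) ->
  Hutch G (closure (monoid_orbit S)) = closure (monoid_orbit S).
Proof.
move=> Sfix; apply/seteqP; split.
  rewrite [C in _ `<=` C](closure_id _).1; last exact: closed_closure.
  apply: closureS => t [g Gg /= /(continuous_image_closure (G_cont Gg)) gt].
  apply: closureS gt => _ [_ [h Mh [x Sx <-]] <-].
  by exists (g \o h); [exact: monoid_comp (monoid_gen Gg) Mh | exists x].
apply: closureS => _ [h Mh [x Sx <-]].
move: h Mh; apply: monoid_ind => [|g h Gg Mh _].
  have [g Gg gx] := Sfix x Sx; exists g => //; exists x => //.
  by apply: subset_closure; exists id; [exact: monoid_id | exists x].
exists g => //; exists (h x) => //.
by apply: subset_closure; exists h => //; exists x.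
Qed.

Lemma closure_monoid_orbit_sub (S B : set X) :
  Hutch G B = B -> S `<=` B -> closure (monoid_orbit S) `<=` B.
Proof.
move=> HB SB; have Bc : closed B by rewrite -HB; exact: closed_closure.
rewrite (closure_id B).1 //; apply: closureS; apply: monoid_orbit_sub => // g Gg _ [y By <-].
by rewrite -HB; apply: subset_closure; exists g => //; exists y.
Qed.

End Monoid.

Lemma ultra_bigcup_seq {T : Type} {U : eqType} (F : set_system T) (P : U -> set T)
    (s : seq U) :
  UltraFilter F -> F [set p | exists2 y, y \in s & P y p] -> exists2 y, y \in s & F (P y).
Proof.
move=> UF; elim: s => [|y s IHs] Fs.
  have PF : ProperFilter F by exact: ultra_proper.
  by exfalso; apply: (@filter_not_empty _ F); apply: filterS Fs => p [].
have [FPy|FnPy] := in_ultra_setVsetC (P y) UF; first by exists y; rewrite ?mem_head.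
have [|z zs FPz] := IHs; last by exists z; rewrite // inE zs orbT.
apply: filterS (filterI FnPy Fs) => p [nPyp [z]].
by rewrite inE => /orP[/eqP -> //|zs Pzp]; exists z.
Qed.

Section TotallyBounded.
Context {R : realType} {X : metricType R}.
Local Notation d := (@mdist R X).

Definition totally_bounded (S : set X) := forall e, 0 < e ->
  exists s : seq X, forall p, S p -> exists2 y, y \in s & d y p < e.

Lemma nbhs_mdist (p : X) (e : R) : 0 < e -> nbhs p [set z | d p z < e].
Proof. by move=> e0; rewrite -metricType_numDomainType.filter_from_mdist_nbhs; exists e. Qed.

Lemma compact_totally_bounded (K : set X) : compact K -> totally_bounded K.
Proof.
(* Without a finite e-net, the complements of finite unions of e-balls form a
   proper filter on K, and a cluster point p of it lies in one of these balls. *)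
move=> cK e e0; apply: contrapT => noNet.
pose Fs (s : seq X) := K `\` [set z | exists2 y, y \in s & d y z < e].
have Fs_nonempty s : Fs s !=set0.
  apply: contrapT => Fs0; apply: noNet; exists s => p Kp.
  by apply: contrapT => np; apply: Fs0; exists p.
have FF : ProperFilter (filter_from [set: seq X] Fs).
  apply: filter_from_proper => [|s _]; last exact: Fs_nonempty.
  apply: filter_from_filter; first by exists [::].
  move=> s1 s2 _ _; exists (s1 ++ s2) => // z [Kz nz]; split; split => // -[y ys yz];
    by apply: nz; exists y; rewrite // mem_cat ys ?orbT.
have [p [Kp cp]] : exists p, K p /\ cluster (filter_from [set: seq X] Fs) p.
  by apply: cK; exists [::] => // z [].
have [z [[_ nz] pz]] : Fs [:: p] `&` [set z | d p z < e] !=set0.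
  by apply: cp; [exists [:: p] | exact: nbhs_mdist].
by apply: nz; exists p; rewrite ?mem_head.
Qed.

Lemma totally_bounded_bounded (S : set X) (x0 : X) : totally_bounded S ->
  exists2 M, 0 <= M & forall p, S p -> d x0 p <= M.
Proof.
move=> /(_ 1 ltr01) [s net]; pose M := \big[Num.max/0]_(y <- s) d x0 y.
have M0 : 0 <= M by exact: bigmax_ge_id.
exists (M + 1) => [|p /net [y ys yp]]; first by rewrite addr_ge0.
have yM : d x0 y <= M by exact: le_bigmax_seq.
by have := metric_triangle x0 y p; lra.
Qed.

Lemma totally_bounded_closure (S : set X) : totally_bounded S -> totally_bounded (closure S).
Proof.
move=> tbS e e0; have e2 : 0 < e / 2 by rewrite divr_gt0.
have [s net] := tbS _ e2; exists s => p /(_ _ (nbhs_mdist p e2)) [x [Sx /= px]].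
have [y ys yx] := net x Sx; exists y => //.
by have := metric_triangle y x p; rewrite (metric_sym x p); lra.
Qed.

Lemma ultra_totally_bounded_ball (F : set_system X) (S : set X) :
  UltraFilter F -> F S -> totally_bounded S ->
  forall e, 0 < e -> exists y, F [set z | d y z < e].
Proof.
move=> UF FS tbS e /tbS [s net].
have [|y _ Fy] := @ultra_bigcup_seq _ _ F (fun y => [set z | d y z < e]) s UF.
  exact: filterS FS.
by exists y.
Qed.

Lemma complete_filter_cvg (F : set_system X) {PF : ProperFilter F} : @complete_space R X ->
  (forall e, 0 < e -> exists y, F [set z | d y z < e]) -> exists l : X, F --> l.
Proof.
move=> cX Fball; pose r (k : nat) : R := k.+1%:R^-1.
have r_small e : 0 < e -> \forall k \near \oo, r k < e.
  by move=> e0; exact: (near_infty_natSinv_lt (PosNum e0)).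
have /boolp.choice [y Fy] : forall k, exists y, F [set z | d y z < r k].
  by move=> k; apply: Fball; rewrite invr_gt0 ltr0Sn.
have y_close m k : d (y m) (y k) < r m + r k.
  have [z [/= mz kz]] := filter_ex (filterI (Fy m) (Fy k)).
  by have := metric_triangle (y m) z (y k); rewrite (metric_sym z); lra.
have [l yl] : exists l : X, y @ \oo --> l.
  apply: (cX y) => e e0; have e2 : 0 < e / 2 by rewrite divr_gt0.
  have [n _ rn] := r_small _ e2; exists n => m k nm nk.
  by have := y_close m k; have := rn _ nm; have := rn _ nk; rewrite /=; lra.
exists l; apply/metricType_numDomainType.fcvgrPdist_lt => e e0.
have e2 : 0 < e / 2 by rewrite divr_gt0.
have /metricType_numDomainType.cvgr_dist_lt/(_ _ e2) yl_e2 := yl.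
have [k [/= lk rk]] := filter_ex (filterI yl_e2 (r_small _ e2)).
apply: filterS (Fy k) => z /= kz.
by have := metric_triangle l (y k) z; lra.
Qed.

Lemma totally_bounded_closure_compact (S : set X) : @complete_space R X ->
  totally_bounded S -> compact (closure S).
Proof.
move=> cX /totally_bounded_closure tbS; rewrite compact_ultra => F UF FS.
have [l Fl] := complete_filter_cvg cX (ultra_totally_bounded_ball UF FS tbS).
exists l; split => //; rewrite [C in C l](closure_id _).1; last exact: closed_closure.
by move=> B /Fl FB; apply: filter_ex (filterI FS FB).
Qed.

End TotallyBounded.

Section Reachable.
Context {R : realType} {X : metricType R} {I : finType}
  (c : I -> X -> X) (q : I -> X) (J : set I) (lam : R) (x0 : X).
Hypotheses (c_cont : forall j, continuous (c j))
  (c_nonexpansive : forall j, J j -> lipschitz_with 1 (c j))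
  (c_contraction : forall j, ~ J j -> lipschitz_with lam (c j))
  (lam_ge0 : 0 <= lam) (lam_lt1 : lam < 1)
  (MJ_compact : compact_IFS (monoid (c @` J))).
Local Notation d := (@mdist R X).
Local Notation MJ := (monoid (c @` J)).

Lemma monoid_nonexpansive g : MJ g -> lipschitz_with 1 g.
Proof.
move: g; apply: monoid_ind => [|_ h [j Jj <-] _ hk]; first exact: lipschitz_with_id.
by rewrite -(mul1r 1); apply: lipschitz_with_comp => //; exact: c_nonexpansive.
Qed.

Inductive reachable : X -> Prop :=
| reachable_base g i : MJ g -> reachable (g (q i))
| reachable_step g j p : MJ g -> ~ J j -> reachable p -> reachable (g (c j p)).

Lemma monoid_orbit_reachable : monoid_orbit (c @` setT) (range q) `<=` reachable.
Proof.
move=> _ [h Mh [_ [i _ <-] <-]].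
pose P h := forall g, MJ g -> reachable (g (h (q i))).
suff /(_ id) : P h by apply; exact: monoid_id.
move: h Mh; apply: (@monoid_ind _ _ _ P) => [|_ h [j _ <-] _ IHh] g Mg.
  exact: reachable_base.
have [Jj|nJj] := pselect (J j).
  by apply: (IHh (g \o c j)); apply: (monoid_comp Mg); apply: monoid_gen; exists j.
by apply: reachable_step => //; apply: (IHh id); exact: monoid_id.
Qed.

Definition one_step (S : set X) : set X := \big[setU/set0]_i ([set q i] `|` c i @` S).

Lemma one_step_compact S : compact S -> compact (one_step S).
Proof.
move=> cS; apply: bigsetU_compact => i _; apply: compactU; first exact: compact_set1.
by apply: continuous_compact => //; exact: continuous_subspaceT.
Qed.

Definition approx (n : nat) : set X := iter n (fun S => Hutch MJ (one_step S)) [set x0].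

Lemma approx_compact n : compact (approx n).
Proof.
by elim: n => [|n IHn] /=; [exact: compact_set1 | apply/MJ_compact/one_step_compact].
Qed.

Lemma approx_base n g i : MJ g -> approx n.+1 (g (q i)).
Proof.
move=> Mg; apply: subset_closure; exists g => //; exists (q i) => //.
by rewrite /one_step (bigD1 i) //=; left; left.
Qed.

Lemma approx_step n g j p : MJ g -> approx n p -> approx n.+1 (g (c j p)).
Proof.
move=> Mg np; apply: subset_closure; exists g => //; exists (c j p) => //.
by rewrite /one_step (bigD1 j) //=; left; right; exists p.
Qed.

Lemma reachable_bounded : exists2 D, 0 <= D & forall p, reachable p -> d x0 p <= D.
Proof.
have [D1 D1_ge0 D1x0] :=
  totally_bounded_bounded x0 (compact_totally_bounded (@approx_compact 1)).
have lam1 : 0 < 1 - lam by rewrite subr_gt0.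
(* the solution D of D = D1 + lam * D *)
exists (D1 / (1 - lam)) => [|p]; first by rewrite divr_ge0 // ltW.
have D1E : D1 / (1 - lam) * (1 - lam) = D1 by rewrite divfK ?gt_eqF.
elim=> [g i Mg|g j p' Mg nJj _ IHp'].
  have := D1x0 _ (@approx_base 0 g i Mg); have : 0 <= D1 / (1 - lam) * lam.
    by rewrite mulr_ge0 ?divr_ge0 // ltW.
  by move: D1E; lra.
have := D1x0 _ (@approx_step 0 g j x0 Mg (erefl x0)).
have := monoid_nonexpansive Mg (c j x0) (c j p').
have := c_contraction nJj x0 p'.
have := metric_triangle x0 (g (c j x0)) (g (c j p')).
have : lam * d x0 p' <= lam * (D1 / (1 - lam)) by exact: ler_wpM2l.
by move: D1E; lra.
Qed.

Lemma reachable_approx D : 0 <= D -> (forall p, reachable p -> d x0 p <= D) ->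
  forall n p, reachable p -> exists2 k, approx n k & d p k <= lam ^+ n * D.
Proof.
move=> D0 x0D; elim=> [|n IHn] p.
  by exists x0; rewrite // expr0 mul1r metric_sym; exact: x0D.
case=> [g i Mg|g j p' Mg nJj /IHn [k nk p'k]].
  by exists (g (q i)); [exact: approx_base | rewrite mdistxx mulr_ge0 ?exprn_ge0].
exists (g (c j k)); first exact: approx_step.
have := monoid_nonexpansive Mg (c j p') (c j k).
have := c_contraction nJj p' k.
have : lam * d p' k <= lam * (lam ^+ n * D) by exact: ler_wpM2l.
by rewrite exprS -mulrA; lra.
Qed.

Lemma reachable_totally_bounded : totally_bounded reachable.
Proof.
move=> e e0; have [D D0 x0D] := reachable_bounded.
have e2 : 0 < e / 2 by rewrite divr_gt0.
have [n lam_n] : exists n, lam ^+ n * D < e / 2.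
  have /cvgrPdist_lt/(_ _ (divr_gt0 e2 (ltr_pwDr ltr01 D0))) : lam ^+ n @[n --> \oo] --> 0.
    by apply: cvg_expr; rewrite ger0_norm.
  move=> [n _ /(_ n (leqnn n))]; rewrite /= sub0r normrN ger0_norm ?exprn_ge0 //.
  rewrite ltr_pdivlMr ?ltr_pwDr // => lam_n; exists n.
  have : 0 <= lam ^+ n by exact: exprn_ge0.
  nra.
have [s net] := compact_totally_bounded (@approx_compact n) e2.
exists s => p /(reachable_approx D0 x0D n) [k /net [y ys yk] pk]; exists y => //.
by have := metric_triangle y k p; rewrite (metric_sym k); lra.
Qed.

End Reachable.

Lemma totally_boundedS {R : realType} {X : metricType R} (A B : set X) :
  A `<=` B -> totally_bounded B -> totally_bounded A.
Proof. by move=> AB tbB e /tbB [s net]; exists s => p /AB /net. Qed.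

Lemma lower_transition_attractor_closure_orbit {R : realType} {X : metricType R}
    (N : nat) (f : 'I_N -> R -> X -> X) (q : 'I_N -> X) :
  (forall i, continuous (f i 1)) -> (forall i, f i 1 (q i) = q i) ->
  lower_transition_attractor f q (closure (monoid_orbit (fam_at f 1) (range q))).
Proof.
move=> f_cont f_fix; split.
- apply: Hutch_closure_monoid_orbit => [_ [i _ <-] // | _ [i _ <-]].
  by exists (f i 1); [exists i | exact: f_fix].
- move=> _ [i _ <-]; apply: subset_closure; exists id; first exact: monoid_id.
  by exists (q i); first by exists i.
- by move=> B HB qB; exact: closure_monoid_orbit_sub.
Qed.

Lemma at_left1_within01 {R : realType} :
  (1 : R)^'- `=>` within [set t : R | 0 <= t <= 1] (nbhs (1 : R)).
Proof.
move=> P /nbhs_ballP [e e0 eP]; apply/nbhs_ballP.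
exists (Num.min e 1) => /=; first by rewrite lt_min e0 ltr01.
move=> t; rewrite /ball /= lt_min => /andP[te t1] tlt1; apply: eP => //=.
rewrite ger0_norm ?subr_ge0 ?ltW // in t1.
by apply/andP; split; [lra | exact: ltW].
Qed.

Lemma near1_unit_interval {R : realType} : \forall t \near (1 : R)^'-, 0 <= t < 1.
Proof.
near=> t; apply/andP; split; near: t; [exact: nbhs_left_ge | exact: nbhs_left_lt].
Unshelve. all: by end_near.
Qed.

Section TransitionFamily.
Context {R : realType} {X : metricType R} (N : nat) (f : 'I_N -> R -> X -> X)
  (qt : 'I_N -> R -> X) (q : 'I_N -> X).
Hypotheses (H1 : forall i x (t0 : R), 0 <= t0 <= 1 ->
     (fun t => f i t x) @ within [set t : R | 0 <= t <= 1] (nbhs t0) --> f i t0 x)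
  (H2 : forall t, 0 <= t < 1 -> (LipF (fun i => f i t) < 1%:E)%E)
  (H3 : forall i t, 0 <= t < 1 -> f i t (qt i t) = qt i t)
  (H3_lim : forall i, qt i t @[t --> 1^'-] --> q i).

Lemma f_cvg_at_left1 i : forall x, f i t x @[t --> 1^'-] --> f i 1 x.
Proof.
move=> x; have /(_ i x) f_cvg01 := H1 (t0 := 1); rewrite ler01 lexx in f_cvg01.
by move=> A /(f_cvg01 isT); exact: at_left1_within01.
Qed.

Lemma f_nonexpansive_near1 i : \forall t \near 1^'-, lipschitz_with 1 (f i t).
Proof.
apply: filterS near1_unit_interval => t /H2 Lf.
apply/Lip_leP/ltW/le_lt_trans/Lf.
exact: (le_bigmax _ (fun j => Lip (f j t)) i).
Qed.

Lemma f1_nonexpansive i : lipschitz_with 1 (f i 1).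
Proof. exact: (lipschitz_with_cvg (@f_cvg_at_left1 i) (f_nonexpansive_near1 i)). Qed.

Lemma f1_fixed_point i : f i 1 (q i) = q i.
Proof.
apply: (fixed_point_cvg (@f_cvg_at_left1 i) ler01 (@H3_lim i) (f_nonexpansive_near1 i)).
by apply: filterS near1_unit_interval => t /H3.
Qed.

End TransitionFamily.

Theorem mainTheorem4 (R : realType) (X : metricType R) (N : nat)
    (f : 'I_N -> R -> X -> X) (qt : 'I_N -> R -> X) (q : 'I_N -> X) :
  @complete_space R X ->
  (2 <= N)%N ->
  (* each f_(i,t), t in [0,1], is a continuous self-map of X *)
  (forall i t, 0 <= t <= 1 -> continuous (f i t)) ->
  (* (H1) *)
  (forall i x (t0 : R), 0 <= t0 <= 1 ->
     (fun t => f i t x) @ within [set t : R | 0 <= t <= 1] (nbhs t0) --> f i t0 x) ->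
  (* (H2) *)
  (forall t, 0 <= t < 1 -> (LipF (fun i => f i t) < 1%:E)%E) ->
  (* (H3): qt i t is the (unique) fixed point of f_(i,t) for t in [0,1), and q_i is its limit *)
  (forall i t, 0 <= t < 1 -> f i t (qt i t) = qt i t) ->
  (forall i, qt i t @[t --> 1^'-] --> q i) ->
  (* the monoid generated by the maps f_(i,1), i in J, is a compact IFS *)
  compact_IFS (monoid [set f i 1 | i in [set i | Lip (f i 1) = 1%:E]]) ->
  exists A : set X, lower_transition_attractor f q A /\ compact A.
Proof.
move=> cX N2 f_cont H1 H2 H3 H3_lim MJ_compact.
have f1_cont i : continuous (f i 1) by apply: f_cont; rewrite ler01 lexx.
have f1_nonexp := f1_nonexpansive H1 H2.
have [lam /andP[lam_ge0 lam_lt1] f1_contr] : exists2 lam, 0 <= lam < 1 &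
    forall i, Lip (f i 1) <> 1%:E -> lipschitz_with lam (f i 1).
  apply: uniform_contraction => i Li1; apply: Lip_lt1_contraction.
  by rewrite lt_neqAle; apply/andP; split; [apply/eqP | apply/Lip_leP].
exists (closure (monoid_orbit (fam_at f 1) (range q))); split.
  exact: lower_transition_attractor_closure_orbit f1_cont (f1_fixed_point H1 H2 H3 H3_lim).
apply: totally_bounded_closure_compact cX _.
pose J := [set i | Lip (f i 1) = 1%:E].
apply: (totally_boundedS (@monoid_orbit_reachable _ _ _ (fun i => f i 1) q J)).
pose i0 : 'I_N := Ordinal (leq_trans (isT : (0 < 2)%N) N2).
exact: (@reachable_totally_bounded _ _ _ _ q J lam (q i0) f1_cont
  (fun i _ => f1_nonexp i) f1_contr lam_ge0 lam_lt1 MJ_compact).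
Qed.
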